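(* Let $f\in C([0,1])$. Then for every $\varepsilon>0$ there exists a function $\phi$ generated by a $\sigma$-activated network with width $36$ and depth $5$ such that $|\phi(x)-f(x)|<\varepsilon$ for all $x\in[0,\tfrac{9}{10}]$.
   Context: Let $\sigma_1:\mathbb{R}\to\mathbb{R}$ be the continuous triangular-wave function of period $2$: $\sigma_1(x)=|x|$ for $x\in[-1,1]$, $\sigma_1(x+2)=\sigma_1(x)$. The activation is $\sigma(x)=\sigma_1(x)$ for $x\ge0$ and $\sigma(x)=x/(|x|+1)$ for $x<0$, applied entrywise. A function generated by a $\sigma$-activated network with one input, width $N$ and depth $L$ is a function of the form $\mathcal{L}_{\ell}\circ\sigma\circ\mathcal{L}_{\ell-1}\circ\cdots\circ\sigma\circ\mathcal{L}_0$ with $\ell\le L$ hidden layers, affine maps $\mathcal{L}_i$, $\mathcal{L}_0$ with domain $\mathbb{R}$, $\mathcal{L}_\ell$ with codomain $\mathbb{R}$, and at most $N$ neurons in each hidden layer. *)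

From Stdlib Require Import Reals List.
Open Scope R_scope.

(* Triangular wave of period 2: sigma1 x = |x| on [-1,1], sigma1 (x+2) = sigma1 x.
   Written as the distance from x to 2*floor((x+1)/2). *)
Definition sigma1 (x : R) : R :=
  Rabs (x - 2 * IZR (Int_part ((x + 1) / 2))).

Definition sigma (x : R) : R :=
  if Rle_dec 0 x then sigma1 x else x / (Rabs x + 1).

(* A hidden layer: output width, weights W j k (output j, input k), biases b j. *)
Record layer := mkLayer {
  lwidth : nat;
  lW : nat -> nat -> R;
  lb : nat -> R
}.

(* Affine map from R^m (vector v, first m coordinates used) given W, b. *)
Definition affine (m : nat) (W : nat -> nat -> R) (b : nat -> R)
  (v : nat -> R) : nat -> R :=
  fun j => b j + fold_right Rplus 0 (map (fun k => W j k * v k) (seq 0 m)).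

Fixpoint eval_hidden (ls : list layer) (m : nat) (v : nat -> R)
  : nat * (nat -> R) :=
  match ls with
  | nil => (m, v)
  | l :: ls' =>
      eval_hidden ls' (lwidth l)
        (fun j => sigma (affine m (lW l) (lb l) v j))
  end.

Definition net_eval (ls : list layer) (wout : nat -> R) (bout : R) (x : R) : R :=
  let '(m, v) := eval_hidden ls 1%nat (fun _ => x) in
  bout + fold_right Rplus 0 (map (fun k => wout k * v k) (seq 0 m)).

(* phi is generated by a sigma-activated network with one input, width N
   and depth L: at most L hidden layers, each with at most N neurons. *)
Definition generated_by_net (N L : nat) (phi : R -> R) : Prop :=
  exists (ls : list layer) (wout : nat -> R) (bout : R),
    (length ls <= L)%nat /\
    Forall (fun l => (lwidth l <= N)%nat) ls /\
    forall x, phi x = net_eval ls wout bout x.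

Definition continuous_on_01 (f : R -> R) : Prop :=
  forall x, 0 <= x <= 1 ->
    forall e, 0 < e -> exists d, 0 < d /\
      forall y, 0 <= y <= 1 -> Rabs (y - x) < d -> Rabs (f y - f x) < e.

From Stdlib Require Import Reals Lra Lia ZArith Znumtheory List.
(* After Reals, whose Rsigma also defines a [sigma]. *)
Open Scope R_scope.

(* The grid points n/(2A), n <= 2A, are split into four families n = j + 4k (j < 4).  For each
   family the network computes a bump, built from the triangular wave, that is positive only
   within 1/(2A) of a grid point of the family, and a code neuron which near the grid point n
   equals sigma1 (2p/q_n) with q_n = 1 + (n + 1) L, twice the distance from p/q_n to Z.
   When L is a multiple of 1, ..., 2A the q_n are pairwise coprime (Goedel's trick), so by the
   Chinese remainder theorem one integer p makes every sigma1 (2p/q_n)/2 a 1/L-approximation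
   of the (normalized) value of f at n/(2A).  Each family outputs min(code/2, bump), bumps of
   families j and j + 2 never overlap, and the output is the maximum of the two pair sums;
   uniform continuity of f does the rest.  On [0, 9/10] every active grid index stays <= 2A. *)

(** * The triangular wave and the activation *)

Lemma Rabs_le_bounds (a b : R) : Rabs a <= b -> - b <= a <= b.
Proof. unfold Rabs; destruct (Rcase_abs a); lra. Qed.

Lemma sigma1_shift (k : Z) (s : R) : -1 <= s <= 1 -> sigma1 (2 * IZR k + s) = Rabs s.
Proof.
  intros Hs; unfold sigma1.
  destruct (Rlt_or_le s 1) as [Hlt | Hge].
  - rewrite <- (Int_part_spec ((2 * IZR k + s + 1) / 2) k) by lra.
    f_equal; ring.
  - assert (s = 1) as -> by lra.
    rewrite <- (Int_part_spec ((2 * IZR k + 1 + 1) / 2) (k + 1))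
      by (rewrite plus_IZR; simpl; lra).
    rewrite plus_IZR, Rabs_R1, Rabs_left by lra; ring.
Qed.

Lemma sigma1_decomp (z : R) : exists (k : Z) (s : R), z = 2 * IZR k + s /\ -1 <= s < 1.
Proof.
  exists (Int_part ((z + 1) / 2)), (z - 2 * IZR (Int_part ((z + 1) / 2))).
  destruct (base_Int_part ((z + 1) / 2)); split; [ring | lra].
Qed.

Lemma sigma1_range (z : R) : 0 <= sigma1 z <= 1.
Proof.
  destruct (sigma1_decomp z) as (k & s & -> & Hs).
  rewrite sigma1_shift by lra.
  split; [apply Rabs_pos | apply Rabs_le; lra].
Qed.

Lemma sigma1_mod (p r q : Z) :
  (0 < q)%Z -> (q | p - r)%Z -> 0 <= 2 * IZR r / IZR q <= 1 ->
  sigma1 (2 * IZR p / IZR q) = 2 * IZR r / IZR q.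
Proof.
  intros Hq [m Hm] Hr.
  apply IZR_lt in Hq.
  assert (Hp : IZR p = IZR r + IZR m * IZR q)
    by (rewrite <- mult_IZR, <- plus_IZR; f_equal; lia).
  replace (2 * IZR p / IZR q) with (2 * IZR m + 2 * IZR r / IZR q)
    by (rewrite Hp; field; lra).
  rewrite sigma1_shift by lra.
  apply Rabs_right; lra.
Qed.

Lemma sigma_of_nonneg (z : R) : 0 <= z -> sigma z = sigma1 z.
Proof. intros Hz; unfold sigma; destruct (Rle_dec 0 z); [reflexivity | lra]. Qed.

Lemma sigma_of_neg (z : R) : z < 0 -> sigma z = z / (Rabs z + 1).
Proof. intros Hz; unfold sigma; destruct (Rle_dec 0 z); [lra | reflexivity]. Qed.

Lemma sigma_id (z : R) : 0 <= z <= 1 -> sigma z = z.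
Proof.
  intros Hz.
  rewrite sigma_of_nonneg by lra.
  replace z with (2 * IZR 0 + z) at 1 by (simpl; ring).
  rewrite sigma1_shift by lra.
  apply Rabs_right; lra.
Qed.

Lemma sigma_shift2 (z : R) : -1 <= z <= 1 -> sigma (z + 2) = Rabs z.
Proof.
  intros Hz.
  rewrite sigma_of_nonneg by lra.
  replace (z + 2) with (2 * IZR 1 + z) by (simpl; ring).
  apply sigma1_shift; lra.
Qed.

Lemma sigma_range (z : R) : -1 < sigma z <= 1.
Proof.
  destruct (Rle_dec 0 z) as [Hz | Hz].
  - rewrite sigma_of_nonneg by lra.
    pose proof (sigma1_range z); lra.
  - rewrite sigma_of_neg, Rabs_left by lra.
    assert (Hd : 0 < - z + 1) by lra.
    split.
    + apply Rmult_lt_reg_r with (- z + 1); [exact Hd |].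
      unfold Rdiv; rewrite Rmult_assoc, Rinv_l by lra; lra.
    + apply Rmult_le_reg_r with (- z + 1); [exact Hd |].
      unfold Rdiv; rewrite Rmult_assoc, Rinv_l by lra; lra.
Qed.

Lemma sigma_bump (b : R) :
  0 <= b <= 1 ->
  sigma ((1 - 2 * sigma b + sigma (3 - 2 * b)) / 2) = Rmax 0 (1 - 2 * b).
Proof.
  intros Hb.
  replace (3 - 2 * b) with ((1 - 2 * b) + 2) by ring.
  rewrite sigma_shift2, (sigma_id b) by lra.
  unfold Rmax, Rabs.
  destruct (Rle_dec 0 (1 - 2 * b)), (Rcase_abs (1 - 2 * b)); rewrite sigma_id; lra.
Qed.

Lemma sigma_min (u v : R) :
  0 <= u <= 1 -> 0 <= v <= 1 ->
  sigma ((u + v) / 2) - sigma (u - v + 2) / 2 = Rmin u v.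
Proof.
  intros Hu Hv.
  rewrite sigma_shift2, sigma_id by lra.
  unfold Rmin, Rabs; destruct (Rle_dec u v), (Rcase_abs (u - v)); lra.
Qed.

Lemma sigma_max (u v : R) :
  0 <= u <= 1 -> 0 <= v <= 1 ->
  (sigma (u - v + 2) + sigma u + sigma v) / 2 = Rmax u v.
Proof.
  intros Hu Hv.
  rewrite sigma_shift2, !sigma_id by lra.
  unfold Rmax, Rabs; destruct (Rle_dec u v), (Rcase_abs (u - v)); lra.
Qed.

(** * The network *)

Definition ramp (A : R) (j : nat) (x : R) : R := sigma (A * x + (5/2 - INR j / 2)).
Definition wave (A : R) (j : nat) (x : R) : R := sigma (A * x + (2 - INR j / 2)).
Definition index_code (A L : R) (j : nat) (x : R) : R :=
  sigma (L * (2 * ramp A j x - 2 - 2 * A * sigma x)).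
Definition bump (A : R) (j : nat) (x : R) : R :=
  sigma ((1 - 2 * sigma (wave A j x) + sigma (3 - 2 * wave A j x)) / 2).
Definition code (A L p : R) (j : nat) (x : R) : R :=
  sigma (2 * p + 2 * p * index_code A L j x).
Definition gap_part (A L p : R) (j : nat) (x : R) : R :=
  sigma (code A L p j x / 2 - bump A j x + 2).
Definition mean_part (A L p : R) (j : nat) (x : R) : R :=
  sigma ((code A L p j x / 2 + bump A j x) / 2).
Definition cell (A L p : R) (j : nat) (x : R) : R :=
  mean_part A L p j x - gap_part A L p j x / 2.
Definition cells02 (A L p x : R) : R := cell A L p 0 x + cell A L p 2 x.
Definition cells13 (A L p x : R) : R := cell A L p 1 x + cell A L p 3 x.
Definition net_core (A L p x : R) : R :=
  (sigma (cells02 A L p x - cells13 A L p x + 2)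
   + sigma (cells02 A L p x) + sigma (cells13 A L p x)) / 2.

Definition W1 (A : R) (i k : nat) : R :=
  match i, k with
  | 0%nat, 0%nat => 1
  | (1 | 2 | 3 | 4 | 5 | 6 | 7 | 8)%nat, 0%nat => A
  | _, _ => 0
  end.
Definition b1 (i : nat) : R :=
  match i with
  | 1%nat => 5/2 | 2%nat => 2 | 3%nat => 3/2 | 4%nat => 1
  | 5%nat => 2 | 6%nat => 3/2 | 7%nat => 1 | 8%nat => 1/2
  | _ => 0
  end.
Definition layer1_out (A x : R) (k : nat) : R :=
  match k with
  | 0%nat => sigma x
  | 1%nat => ramp A 0 x | 2%nat => ramp A 1 x | 3%nat => ramp A 2 x | 4%nat => ramp A 3 x
  | 5%nat => wave A 0 x | 6%nat => wave A 1 x | 7%nat => wave A 2 x | 8%nat => wave A 3 x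
  | _ => 0
  end.

Definition W2 (A L : R) (i k : nat) : R :=
  match i, k with
  | 0%nat, 0%nat | 3%nat, 0%nat | 6%nat, 0%nat | 9%nat, 0%nat => -2 * A * L
  | 0%nat, 1%nat | 3%nat, 2%nat | 6%nat, 3%nat | 9%nat, 4%nat => 2 * L
  | 1%nat, 5%nat | 4%nat, 6%nat | 7%nat, 7%nat | 10%nat, 8%nat => -2
  | 2%nat, 5%nat | 5%nat, 6%nat | 8%nat, 7%nat | 11%nat, 8%nat => 1
  | _, _ => 0
  end.
Definition b2 (L : R) (i : nat) : R :=
  match i with
  | 0%nat | 3%nat | 6%nat | 9%nat => -2 * L
  | 1%nat | 4%nat | 7%nat | 10%nat => 3
  | _ => 0
  end.
Definition layer2_out (A L x : R) (k : nat) : R :=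
  match k with
  | 0%nat => index_code A L 0 x | 1%nat => sigma (3 - 2 * wave A 0 x) | 2%nat => sigma (wave A 0 x)
  | 3%nat => index_code A L 1 x | 4%nat => sigma (3 - 2 * wave A 1 x) | 5%nat => sigma (wave A 1 x)
  | 6%nat => index_code A L 2 x | 7%nat => sigma (3 - 2 * wave A 2 x) | 8%nat => sigma (wave A 2 x)
  | 9%nat => index_code A L 3 x | 10%nat => sigma (3 - 2 * wave A 3 x) | 11%nat => sigma (wave A 3 x)
  | _ => 0
  end.

Definition W3 (p : R) (i k : nat) : R :=
  match i, k with
  | 0%nat, 0%nat | 2%nat, 3%nat | 4%nat, 6%nat | 6%nat, 9%nat => 2 * p
  | 1%nat, 1%nat | 3%nat, 4%nat | 5%nat, 7%nat | 7%nat, 10%nat => 1/2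
  | 1%nat, 2%nat | 3%nat, 5%nat | 5%nat, 8%nat | 7%nat, 11%nat => -1
  | _, _ => 0
  end.
Definition b3 (p : R) (i : nat) : R :=
  match i with
  | 0%nat | 2%nat | 4%nat | 6%nat => 2 * p
  | 1%nat | 3%nat | 5%nat | 7%nat => 1/2
  | _ => 0
  end.
Definition layer3_out (A L p x : R) (k : nat) : R :=
  match k with
  | 0%nat => code A L p 0 x | 1%nat => bump A 0 x
  | 2%nat => code A L p 1 x | 3%nat => bump A 1 x
  | 4%nat => code A L p 2 x | 5%nat => bump A 2 x
  | 6%nat => code A L p 3 x | 7%nat => bump A 3 x
  | _ => 0
  end.

Definition W4 (i k : nat) : R :=
  match i, k with
  | 0%nat, 0%nat | 2%nat, 2%nat | 4%nat, 4%nat | 6%nat, 6%nat => 1/2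
  | 0%nat, 1%nat | 2%nat, 3%nat | 4%nat, 5%nat | 6%nat, 7%nat => -1
  | 1%nat, 0%nat | 3%nat, 2%nat | 5%nat, 4%nat | 7%nat, 6%nat => 1/4
  | 1%nat, 1%nat | 3%nat, 3%nat | 5%nat, 5%nat | 7%nat, 7%nat => 1/2
  | _, _ => 0
  end.
Definition b4 (i : nat) : R :=
  match i with
  | 0%nat | 2%nat | 4%nat | 6%nat => 2
  | _ => 0
  end.
Definition layer4_out (A L p x : R) (k : nat) : R :=
  match k with
  | 0%nat => gap_part A L p 0 x | 1%nat => mean_part A L p 0 x
  | 2%nat => gap_part A L p 1 x | 3%nat => mean_part A L p 1 x
  | 4%nat => gap_part A L p 2 x | 5%nat => mean_part A L p 2 x
  | 6%nat => gap_part A L p 3 x | 7%nat => mean_part A L p 3 x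
  | _ => 0
  end.

Definition W5 (i k : nat) : R :=
  match i, k with
  | 0%nat, (0 | 4)%nat | 1%nat, (0 | 4)%nat | 2%nat, (2 | 6)%nat => -1/2
  | 0%nat, (1 | 5)%nat | 1%nat, (1 | 5)%nat | 2%nat, (3 | 7)%nat => 1
  | 0%nat, (2 | 6)%nat => 1/2
  | 0%nat, (3 | 7)%nat => -1
  | _, _ => 0
  end.
Definition b5 (i : nat) : R := match i with 0%nat => 2 | _ => 0 end.
Definition layer5_out (A L p x : R) (k : nat) : R :=
  match k with
  | 0%nat => sigma (cells02 A L p x - cells13 A L p x + 2)
  | 1%nat => sigma (cells02 A L p x)
  | 2%nat => sigma (cells13 A L p x)
  | _ => 0
  end.

Definition net_layers (A L p : R) : list layer :=
  mkLayer 9 (W1 A) b1 :: mkLayer 12 (W2 A L) (b2 L) :: mkLayer 8 (W3 p) (b3 p)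
  :: mkLayer 8 W4 b4 :: mkLayer 3 W5 b5 :: nil.

Definition eval_from (ls : list layer) (wo : nat -> R) (bo : R) (m : nat) (v : nat -> R) : R :=
  let '(m', v') := eval_hidden ls m v in
  bo + fold_right Rplus 0 (map (fun k => wo k * v' k) (seq 0 m')).

Lemma sum_seq_ext (m s : nat) (F G : nat -> R) :
  (forall k, (s <= k < s + m)%nat -> F k = G k) ->
  fold_right Rplus 0 (map F (seq s m)) = fold_right Rplus 0 (map G (seq s m)).
Proof.
  revert s; induction m as [| m IH]; intros s Hext; simpl; [reflexivity |].
  rewrite Hext by lia; f_equal; apply IH; intros; apply Hext; lia.
Qed.

Lemma eval_from_ext (ls : list layer) (wo : nat -> R) (bo : R) (m : nat) (v v' : nat -> R) :
  (forall k, (k < m)%nat -> v k = v' k) -> eval_from ls wo bo m v = eval_from ls wo bo m v'.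
Proof.
  revert m v v'; induction ls as [| l ls IH]; intros m v v' Hext; unfold eval_from; simpl.
  - f_equal; apply sum_seq_ext; intros k Hk; rewrite Hext by lia; reflexivity.
  - apply IH; intros k _; f_equal; unfold affine; f_equal.
    apply sum_seq_ext; intros i Hi; rewrite Hext by lia; reflexivity.
Qed.

Lemma eval_from_cons (l : layer) (ls : list layer) (wo : nat -> R) (bo : R) (m : nat) (v : nat -> R) :
  eval_from (l :: ls) wo bo m v
  = eval_from ls wo bo (lwidth l) (fun j => sigma (affine m (lW l) (lb l) v j)).
Proof. reflexivity. Qed.

Ltac layer_equal :=
  let k := fresh "k" in
  intros k ?;
  repeat (destruct k as [| k];
    [ unfold affine;
      cbn [fold_right map seq W1 b1 layer1_out W2 b2 layer2_out W3 b3 layer3_out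
           W4 b4 layer4_out W5 b5 layer5_out];
      unfold cells02, cells13, cell, gap_part, mean_part, bump, code, index_code, ramp, wave;
      cbn [INR]; f_equal; field
    | ]);
  lia.

Lemma net_eval_net_layers (A L p B x : R) :
  net_eval (net_layers A L p) (fun _ => 2 * B) (- B) x = 4 * B * net_core A L p x - B.
Proof.
  change (net_eval _ _ _ x) with (eval_from (net_layers A L p) (fun _ => 2 * B) (- B) 1 (fun _ => x)).
  unfold net_layers; rewrite eval_from_cons; cbn [lwidth lW lb].
  rewrite (eval_from_ext _ _ _ _ _ (layer1_out A x)) by layer_equal.
  rewrite eval_from_cons; cbn [lwidth lW lb].
  rewrite (eval_from_ext _ _ _ _ _ (layer2_out A L x)) by layer_equal.
  rewrite eval_from_cons; cbn [lwidth lW lb].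
  rewrite (eval_from_ext _ _ _ _ _ (layer3_out A L p x)) by layer_equal.
  rewrite eval_from_cons; cbn [lwidth lW lb].
  rewrite (eval_from_ext _ _ _ _ _ (layer4_out A L p x)) by layer_equal.
  rewrite eval_from_cons; cbn [lwidth lW lb].
  rewrite (eval_from_ext _ _ _ _ _ (layer5_out A L p x)) by layer_equal.
  unfold eval_from, net_core; cbn [eval_hidden fold_right map seq layer5_out]; field.
Qed.

Lemma net_layers_generated (A L p : R) (wo : nat -> R) (bo : R) :
  generated_by_net 36 5 (net_eval (net_layers A L p) wo bo).
Proof.
  exists (net_layers A L p), wo, bo; split; [simpl; lia |]; split; [| reflexivity].
  repeat (apply Forall_cons; [simpl; lia |]); apply Forall_nil.
Qed.

(** * Analysis of one family of neurons *)

Section Cell.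

Variables (A L p x : R) (j : nat).
Hypotheses (HA : 0 <= A) (HL : 0 < L) (Hp : 0 <= p) (Hx : 0 <= x <= 1) (Hj : (j <= 3)%nat).

Let HAx : 0 <= A * x.
Proof. apply Rmult_le_pos; lra. Qed.

Let Hj_R : 0 <= INR j <= 3.
Proof. split; [apply pos_INR | apply (le_INR j 3) in Hj; simpl in Hj; lra]. Qed.

Lemma wave_range : 0 <= wave A j x <= 1.
Proof. unfold wave; rewrite sigma_of_nonneg by lra; apply sigma1_range. Qed.

Lemma bump_eq : bump A j x = Rmax 0 (1 - 2 * wave A j x).
Proof. apply sigma_bump, wave_range. Qed.

Lemma bump_range : 0 <= bump A j x <= 1.
Proof.
  rewrite bump_eq; pose proof wave_range.
  unfold Rmax; destruct (Rle_dec 0 (1 - 2 * wave A j x)); lra.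
Qed.

Lemma code_range : 0 <= code A L p j x <= 1.
Proof.
  unfold code; pose proof (sigma_range (L * (2 * ramp A j x - 2 - 2 * A * sigma x))).
  rewrite sigma_of_nonneg; [apply sigma1_range |].
  fold (index_code A L j x) in H; nra.
Qed.

Lemma cell_eq : cell A L p j x = Rmin (code A L p j x / 2) (bump A j x).
Proof.
  pose proof code_range; unfold cell, mean_part, gap_part.
  apply sigma_min; [lra | apply bump_range].
Qed.

Lemma cell_range : 0 <= cell A L p j x <= 1/2.
Proof.
  rewrite cell_eq; pose proof code_range; pose proof bump_range.
  unfold Rmin; destruct (Rle_dec (code A L p j x / 2) (bump A j x)); lra.
Qed.

Lemma cell_support :
  cell A L p j x = 0 \/ exists k : nat, Rabs (A * x - (INR j / 2 + 2 * INR k)) < 1/2.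
Proof.
  destruct (Rle_dec (bump A j x) 0) as [Hb | Hb].
  - left; rewrite cell_eq; pose proof code_range; pose proof bump_range.
    rewrite Rmin_right by lra; lra.
  - right; rewrite bump_eq in Hb; unfold wave in Hb.
    rewrite sigma_of_nonneg in Hb by lra.
    destruct (sigma1_decomp (A * x + (2 - INR j / 2))) as (k & s & Hks & Hs).
    rewrite Hks, sigma1_shift in Hb by lra.
    assert (Habs : Rabs s < 1/2)
      by (unfold Rmax in Hb; destruct (Rle_dec 0 (1 - 2 * Rabs s)); lra).
    assert (Hk : (0 < k)%Z)
      by (apply lt_IZR; pose proof (Rabs_def2 _ _ Habs); lra).
    exists (Z.to_nat (k - 1)).
    rewrite (INR_IZR_INZ (Z.to_nat (k - 1))), Z2Nat.id, minus_IZR by lia.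
    replace (A * x - (INR j / 2 + 2 * (IZR k - IZR 1))) with s by (simpl; lra).
    exact Habs.
Qed.

Section NearGridPoint.

Variable k : nat.

Let s := A * x - (INR j / 2 + 2 * INR k).

Let shifted (c : R) : A * x + (c - INR j / 2) = 2 * IZR (Z.of_nat k + 1) + (s + (c - 2)).
Proof. unfold s; rewrite plus_IZR, <- INR_IZR_INZ; simpl; ring. Qed.

Lemma bump_near : Rabs s <= 1/4 -> 1/2 <= bump A j x.
Proof.
  intros Hs; pose proof (Rabs_le_bounds _ _ Hs).
  rewrite bump_eq; unfold wave.
  rewrite sigma_of_nonneg, shifted by lra.
  replace (s + (2 - 2)) with s by ring.
  rewrite sigma1_shift by lra.
  apply Rmax_Rle; right; lra.
Qed.

Lemma code_near : Rabs s < 1/2 ->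
  code A L p j x = sigma1 (2 * p / (L * (INR (j + 4 * k) + 1) + 1)).
Proof.
  intros Hs; apply Rabs_def2 in Hs.
  assert (HN : INR (j + 4 * k) = INR j + 4 * INR k)
    by (rewrite plus_INR, mult_INR; simpl; ring).
  assert (Hq : 0 < L * (INR (j + 4 * k) + 1))
    by (rewrite HN; pose proof (pos_INR k); apply Rmult_lt_0_compat; lra).
  assert (Hramp : ramp A j x = s + 1/2).
  { unfold ramp; rewrite sigma_of_nonneg, shifted, sigma1_shift by lra.
    rewrite Rabs_right by lra; lra. }
  (* near the grid point the index neuron sees exactly -L (n + 1) with n = j + 4 k *)
  assert (Hidx : index_code A L j x
                 = - (L * (INR (j + 4 * k) + 1)) / (L * (INR (j + 4 * k) + 1) + 1)).
  { unfold index_code; rewrite Hramp, (sigma_id x) by lra.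
    replace (L * (2 * (s + 1/2) - 2 - 2 * A * x)) with (- (L * (INR (j + 4 * k) + 1)))
      by (rewrite HN; unfold s; field).
    rewrite sigma_of_neg, Rabs_Ropp, Rabs_right by lra; reflexivity. }
  unfold code; rewrite Hidx.
  replace (2 * p + 2 * p * (- (L * (INR (j + 4 * k) + 1)) / (L * (INR (j + 4 * k) + 1) + 1)))
    with (2 * p / (L * (INR (j + 4 * k) + 1) + 1)) by (field; lra).
  apply sigma_of_nonneg, Rmult_le_pos; [lra | apply Rlt_le, Rinv_0_lt_compat; lra].
Qed.

End NearGridPoint.

End Cell.

Lemma INR_grid_half (j k : nat) : INR (j + 4 * k) / 2 = INR j / 2 + 2 * INR k.
Proof. rewrite plus_INR, mult_INR; simpl; field. Qed.

Lemma cells_disjoint (A L p x : R) (j : nat) :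
  0 <= A -> 0 <= p -> 0 <= x <= 1 -> (j <= 1)%nat ->
  cell A L p j x = 0 \/ cell A L p (j + 2) x = 0.
Proof.
  intros HA Hp Hx Hj.
  destruct (cell_support A L p x j HA Hp Hx ltac:(lia)) as [H1 | [k1 Hk1]]; [now left |].
  destruct (cell_support A L p x (j + 2) HA Hp Hx ltac:(lia)) as [H2 | [k2 Hk2]]; [now right |].
  exfalso; rewrite plus_INR in Hk2; simpl in Hk2.
  apply Rabs_def2 in Hk1; apply Rabs_def2 in Hk2.
  (* both j/2 + 2 k1 and (j + 2)/2 + 2 k2 are within 1/2 of A x, but they differ by an odd integer *)
  assert (Hd : -1 < IZR (2 * (Z.of_nat k1 - Z.of_nat k2) - 1) < 1)
    by (rewrite minus_IZR, mult_IZR, minus_IZR, <- !INR_IZR_INZ; simpl; lra).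
  destruct Hd as [Hd1 Hd2]; apply lt_IZR in Hd1; apply lt_IZR in Hd2; lia.
Qed.

Section Approximation.

Variables (A L p x y eta eta' : R) (g : nat -> R).
Hypotheses (HA : 5 <= A) (HL : 0 < L) (Hp : 0 <= p) (Hx : 0 <= x <= 9/10).
Hypothesis g_encoded : forall n, INR n <= 2 * A ->
  0 <= g n /\ g n - eta <= sigma1 (2 * p / (L * (INR n + 1) + 1)) / 2 <= g n.
Hypothesis g_close : forall n, INR n <= 2 * A ->
  Rabs (A * x - INR n / 2) < 1/2 -> Rabs (g n - y) < eta'.

Let HA0 : 0 <= A.
Proof. lra. Qed.

Let Hx1 : 0 <= x <= 1.
Proof. lra. Qed.

Lemma grid_index_bound (n : nat) : Rabs (A * x - INR n / 2) < 1/2 -> INR n <= 2 * A.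
Proof. intros Hn; apply Rabs_def2 in Hn; nra. Qed.

Lemma nearest_grid_point : exists n : nat, Rabs (A * x - INR n / 2) <= 1/4.
Proof.
  destruct (base_Int_part (2 * (A * x) + 1/2)) as [Hz1 Hz2].
  set (z := Int_part (2 * (A * x) + 1/2)) in *.
  assert (Hz : (0 <= z)%Z)
    by (assert (-1 < z)%Z by (apply lt_IZR; simpl; nra); lia).
  exists (Z.to_nat z).
  rewrite INR_IZR_INZ, Z2Nat.id by exact Hz.
  apply Rabs_le; lra.
Qed.

Lemma target_lower : - eta' < y.
Proof.
  destruct nearest_grid_point as [n Hn].
  assert (Hn' : Rabs (A * x - INR n / 2) < 1/2) by lra.
  pose proof (grid_index_bound n Hn') as HnA.
  destruct (g_encoded n HnA) as [Hg _].
  pose proof (Rabs_def2 _ _ (g_close n HnA Hn')); lra.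
Qed.

Lemma cell_upper (j : nat) : (j <= 3)%nat -> cell A L p j x < y + eta'.
Proof.
  intros Hj.
  destruct (cell_support A L p x j HA0 Hp Hx1 Hj) as [-> | [k Hk]].
  { pose proof target_lower; lra. }
  assert (Hn : Rabs (A * x - INR (j + 4 * k) / 2) < 1/2) by now rewrite INR_grid_half.
  pose proof (grid_index_bound _ Hn) as HnA.
  destruct (g_encoded _ HnA) as (_ & _ & Hcode).
  pose proof (Rabs_def2 _ _ (g_close _ HnA Hn)).
  rewrite (cell_eq A L p x j HA0 Hp Hx1 Hj), (code_near A L p x j HA0 HL Hp Hx1 Hj k Hk).
  pose proof (Rmin_l (sigma1 (2 * p / (L * (INR (j + 4 * k) + 1) + 1)) / 2) (bump A j x)).
  lra.
Qed.

Lemma cell_lower : exists j, (j <= 3)%nat /\ y - eta - eta' < cell A L p j x.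
Proof.
  destruct nearest_grid_point as [n Hn].
  assert (Hn' : Rabs (A * x - INR n / 2) < 1/2) by lra.
  pose proof (grid_index_bound n Hn') as HnA.
  destruct (g_encoded n HnA) as (_ & Hcode1 & Hcode2).
  pose proof (Rabs_def2 _ _ (g_close n HnA Hn')).
  assert (Hj : (n mod 4 <= 3)%nat) by (pose proof (Nat.mod_upper_bound n 4); lia).
  assert (Hdec : n = (n mod 4 + 4 * (n / 4))%nat) by (pose proof (Nat.div_mod_eq n 4); lia).
  rewrite Hdec, INR_grid_half in Hn.
  exists (n mod 4)%nat; split; [exact Hj |].
  assert (Hk : Rabs (A * x - (INR (n mod 4) / 2 + 2 * INR (n / 4))) < 1/2) by lra.
  rewrite (cell_eq A L p x _ HA0 Hp Hx1 Hj), (code_near A L p x _ HA0 HL Hp Hx1 Hj _ Hk), <- Hdec.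
  pose proof (bump_near A x _ HA0 Hx1 Hj _ Hn).
  pose proof (sigma1_range (2 * p / (L * (INR n + 1) + 1))).
  rewrite Rmin_left by lra; lra.
Qed.

Lemma net_core_approx : Rabs (net_core A L p x - y) < eta + eta'.
Proof.
  assert (Heta : 0 <= eta) by (pose proof (g_encoded 0 ltac:(simpl; lra)); lra).
  pose proof (cell_range A L p x 0 HA0 Hp Hx1 ltac:(lia)).
  pose proof (cell_range A L p x 1 HA0 Hp Hx1 ltac:(lia)).
  pose proof (cell_range A L p x 2 HA0 Hp Hx1 ltac:(lia)).
  pose proof (cell_range A L p x 3 HA0 Hp Hx1 ltac:(lia)).
  assert (H02 : cells02 A L p x < y + eta').
  { pose proof (cell_upper 0 ltac:(lia)); pose proof (cell_upper 2 ltac:(lia)).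
    unfold cells02; destruct (cells_disjoint A L p x 0 HA0 Hp Hx1 ltac:(lia)); simpl in *; lra. }
  assert (H13 : cells13 A L p x < y + eta').
  { pose proof (cell_upper 1 ltac:(lia)); pose proof (cell_upper 3 ltac:(lia)).
    unfold cells13; destruct (cells_disjoint A L p x 1 HA0 Hp Hx1 ltac:(lia)); simpl in *; lra. }
  assert (Hmax : y - eta - eta' < Rmax (cells02 A L p x) (cells13 A L p x)).
  { pose proof (Rmax_l (cells02 A L p x) (cells13 A L p x)).
    pose proof (Rmax_r (cells02 A L p x) (cells13 A L p x)).
    destruct cell_lower as (j & Hj & Hlow).
    unfold cells02, cells13 in *; destruct j as [| [| [| [| j]]]]; [lra .. | lia]. }
  pose proof (Rmax_lub_lt _ _ _ H02 H13).
  unfold net_core; rewrite sigma_max by (unfold cells02, cells13; lra).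
  apply Rabs_def1; lra.
Qed.

End Approximation.

(** * Encoding the grid values in one integer weight *)

Lemma rel_prime_shifted_multiples (L a b : Z) :
  (b - a | L)%Z -> rel_prime (1 + a * L) (1 + b * L).
Proof.
  intros Hdiv; constructor; [apply Z.divide_1_l | apply Z.divide_1_l |].
  intros d Ha Hb.
  assert (Hba : (d | b - a)%Z).
  { replace (b - a)%Z with (b * (1 + a * L) - a * (1 + b * L))%Z by ring.
    apply Z.divide_sub_r; apply Z.divide_mul_r; assumption. }
  assert (HL : (d | L)%Z) by (apply Z.divide_trans with (b - a)%Z; assumption).
  replace 1%Z with (1 + a * L - a * L)%Z by ring.
  apply Z.divide_sub_r; [assumption | apply Z.divide_mul_r; assumption].
Qed.

Fixpoint prod_upto (q : nat -> Z) (N : nat) : Z :=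
  match N with
  | O => q O
  | S N' => (prod_upto q N' * q N)%Z
  end.

Lemma prod_upto_pos (q : nat -> Z) (N : nat) :
  (forall n, (0 < q n)%Z) -> (0 < prod_upto q N)%Z.
Proof. intros Hq; induction N as [| N IH]; simpl; [apply Hq | pose proof (Hq (S N)); lia]. Qed.

Lemma divide_prod_upto (q : nat -> Z) (N n : nat) :
  (n <= N)%nat -> (q n | prod_upto q N)%Z.
Proof.
  induction N as [| N IH]; intros Hn; simpl.
  - replace n with 0%nat by lia; apply Z.divide_refl.
  - destruct (Nat.eq_dec n (S N)) as [-> | Hne].
    + apply Z.divide_mul_r, Z.divide_refl.
    + apply Z.divide_mul_l, IH; lia.
Qed.

Lemma rel_prime_prod_upto (q : nat -> Z) (N : nat) (m : Z) :
  (forall n, (n <= N)%nat -> rel_prime (q n) m) -> rel_prime (prod_upto q N) m.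
Proof.
  induction N as [| N IH]; intros Hq; simpl; [now apply Hq |].
  apply rel_prime_sym, rel_prime_mult; apply rel_prime_sym; [apply IH; intros |]; apply Hq; lia.
Qed.

Lemma chinese_remainder (q r : nat -> Z) (N : nat) :
  (forall n m, (n <= N)%nat -> (m <= N)%nat -> n <> m -> rel_prime (q n) (q m)) ->
  exists z, forall n, (n <= N)%nat -> (q n | z - r n)%Z.
Proof.
  induction N as [| N IH]; intros Hcop.
  - exists (r 0%nat); intros n Hn.
    replace n with 0%nat by lia; rewrite Z.sub_diag; apply Z.divide_0_r.
  - destruct IH as [z Hz]; [intros; apply Hcop; lia |].
    assert (Hrel : rel_prime (prod_upto q N) (q (S N)))
      by (apply rel_prime_prod_upto; intros; apply Hcop; lia).
    destruct (rel_prime_bezout _ _ Hrel) as [u v Huv].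
    exists (z + prod_upto q N * u * (r (S N) - z))%Z; intros n Hn.
    destruct (Nat.eq_dec n (S N)) as [-> | Hne].
    + exists ((z - r (S N)) * v)%Z.
      replace (prod_upto q N * u)%Z with (1 - v * q (S N))%Z by lia; ring.
    + replace (z + prod_upto q N * u * (r (S N) - z) - r n)%Z
        with (z - r n + prod_upto q N * (u * (r (S N) - z)))%Z by ring.
      apply Z.divide_add_r; [apply Hz; lia |].
      apply Z.divide_mul_l, divide_prod_upto; lia.
Qed.

Lemma Int_part_ratio (a q : R) :
  0 <= a -> 1 <= q ->
  0 <= IZR (Int_part (a * q)) / q /\ a - 1 / q <= IZR (Int_part (a * q)) / q <= a.
Proof.
  intros Ha Hq.
  destruct (base_Int_part (a * q)) as [Hlo Hhi].
  assert (H0 : 0 <= IZR (Int_part (a * q))).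
  { apply IZR_le; assert (-1 < Int_part (a * q))%Z by (apply lt_IZR; nra); lia. }
  assert (E : IZR (Int_part (a * q)) / q * q = IZR (Int_part (a * q))) by (field; lra).
  repeat split.
  - apply Rmult_le_pos; [exact H0 | apply Rlt_le, Rinv_0_lt_compat; lra].
  - apply Rmult_le_reg_r with q; [lra |].
    rewrite E; replace ((a - 1 / q) * q) with (a * q - 1) by (field; lra); lra.
  - apply Rmult_le_reg_r with q; [lra |]; rewrite E; lra.
Qed.

Lemma grid_encoding (g : nat -> R) (N : nat) (Lz : Z) :
  (1 <= Lz)%Z -> (forall d, (1 <= d <= Z.of_nat N)%Z -> (d | Lz)%Z) ->
  (forall n, (n <= N)%nat -> 0 <= g n <= 1/2) ->
  exists pz : Z, (0 <= pz)%Z /\ forall n, (n <= N)%nat ->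
    g n - 1 / IZR Lz <= sigma1 (2 * IZR pz / (IZR Lz * (INR n + 1) + 1)) / 2 <= g n.
Proof.
  intros HLz Hdiv Hg.
  set (q n := (1 + (Z.of_nat n + 1) * Lz)%Z).
  set (r n := Int_part (g n * IZR (q n))).
  assert (Hq : forall n, IZR (q n) = IZR Lz * (INR n + 1) + 1).
  { intros n; unfold q; rewrite plus_IZR, mult_IZR, plus_IZR, <- INR_IZR_INZ; simpl; ring. }
  assert (Hqpos : forall n, (0 < q n)%Z) by (intros n; unfold q; nia).
  destruct (chinese_remainder q r N) as [z Hz].
  { intros n m Hn Hm Hnm; apply rel_prime_shifted_multiples.
    apply Z.divide_abs_l, Hdiv; lia. }
  pose proof (prod_upto_pos q N Hqpos) as HP.
  exists (z mod prod_upto q N)%Z; split; [apply Z.mod_pos_bound; exact HP |].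
  intros n Hn; rewrite <- Hq.
  apply IZR_le in HLz.
  assert (HqL : IZR Lz + 1 <= IZR (q n)) by (rewrite Hq; pose proof (pos_INR n); nra).
  destruct (Int_part_ratio (g n) (IZR (q n))) as (Hr0 & Hr1 & Hr2); [apply Hg; lia | lra |].
  fold (r n) in Hr0, Hr1, Hr2.
  rewrite (sigma1_mod _ (r n)); [| apply Hqpos | | ].
  - assert (1 / IZR (q n) <= 1 / IZR Lz)
      by (apply Rmult_le_compat_l; [lra | apply Rinv_le_contravar; lra]).
    split; lra.
  - rewrite Z.mod_eq by lia.
    replace (z - prod_upto q N * (z / prod_upto q N) - r n)%Z
      with (z - r n - prod_upto q N * (z / prod_upto q N))%Z by ring.
    apply Z.divide_sub_r; [apply Hz; lia |].
    apply Z.divide_mul_l, divide_prod_upto; exact Hn.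
  - pose proof (Hg n Hn); lra.
Qed.

Lemma divide_fact (M : nat) (d : Z) : (1 <= d <= Z.of_nat M)%Z -> (d | Z.of_nat (fact M))%Z.
Proof.
  induction M as [| M IH]; intros Hd; [simpl in Hd; lia |].
  change (fact (S M)) with (S M * fact M)%nat; rewrite Nat2Z.inj_mul.
  destruct (Z.eq_dec d (Z.of_nat (S M))) as [-> | Hne].
  - apply Z.divide_mul_l, Z.divide_refl.
  - apply Z.divide_mul_r, IH; lia.
Qed.

Lemma le_fact (M : nat) : (M <= fact M)%nat.
Proof.
  induction M as [| M IH]; [simpl; lia |].
  change (fact (S M)) with (S M * fact M)%nat; pose proof (lt_O_fact M); nia.
Qed.

Lemma exists_common_multiple_gt (N : nat) (c : R) :
  exists Lz : Z, (1 <= Lz)%Z /\ c < IZR Lz /\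
    forall d, (1 <= d <= Z.of_nat N)%Z -> (d | Lz)%Z.
Proof.
  destruct (INR_unbounded c) as [m Hm].
  exists (Z.of_nat (fact (N + m))); repeat split.
  - pose proof (lt_O_fact (N + m)); lia.
  - rewrite <- INR_IZR_INZ; apply Rlt_le_trans with (INR m); [lra |].
    apply le_INR; pose proof (le_fact (N + m)); lia.
  - intros d Hd; apply divide_fact; lia.
Qed.

(** * Sampling f on the grid *)

Definition clamp01 (x : R) : R := Rmax 0 (Rmin 1 x).

Lemma clamp01_range (x : R) : 0 <= clamp01 x <= 1.
Proof. unfold clamp01, Rmax, Rmin; repeat destruct (Rle_dec _ _); lra. Qed.

Lemma clamp01_id (x : R) : 0 <= x <= 1 -> clamp01 x = x.
Proof. intros Hx; unfold clamp01, Rmax, Rmin; repeat destruct (Rle_dec _ _); lra. Qed.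

Lemma clamp01_lipschitz (x y : R) : Rabs (clamp01 x - clamp01 y) <= Rabs (x - y).
Proof.
  unfold clamp01, Rmax, Rmin.
  repeat destruct (Rle_dec _ _); unfold Rabs; repeat destruct (Rcase_abs _); lra.
Qed.

Lemma continuous_on_01_uniform (f : R -> R) :
  continuous_on_01 f -> forall e, 0 < e -> exists d, 0 < d /\
    forall x y, 0 <= x <= 1 -> 0 <= y <= 1 -> Rabs (x - y) < d -> Rabs (f x - f y) < e.
Proof.
  intros Hf e He.
  assert (Hc : forall x, 0 <= x <= 1 -> continuity_pt (fun z => f (clamp01 z)) x).
  { intros x0 _ eps Heps.
    destruct (Hf (clamp01 x0) (clamp01_range x0) eps Heps) as (d & Hd & Hfd).
    exists d; split; [exact Hd |]; intros z [_ Hz]; simpl in *; unfold R_dist in *.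
    apply Hfd; [apply clamp01_range |].
    eapply Rle_lt_trans; [apply clamp01_lipschitz | exact Hz]. }
  destruct (Heine _ _ (compact_P3 0 1) Hc (mkposreal e He)) as [d Hd].
  exists d; split; [apply cond_pos |]; intros x y Hx Hy Hxy.
  specialize (Hd x y Hx Hy Hxy); simpl in Hd.
  rewrite !clamp01_id in Hd by assumption; exact Hd.
Qed.

Lemma finite_bound (h : nat -> R) (N : nat) :
  exists B, 0 < B /\ forall n, (n <= N)%nat -> Rabs (h n) <= B.
Proof.
  induction N as [| N (B & HB & Hh)].
  - exists (Rabs (h 0%nat) + 1); split; [pose proof (Rabs_pos (h 0%nat)); lra |].
    intros n Hn; replace n with 0%nat by lia; lra.
  - exists (B + Rabs (h (S N))); pose proof (Rabs_pos (h (S N))); split; [lra |].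
    intros n Hn; destruct (Nat.eq_dec n (S N)) as [-> | Hne]; [lra |].
    pose proof (Hh n ltac:(lia)); lra.
Qed.

Lemma grid_point_close (A d x : R) (n : nat) :
  0 < d -> 1 / d < A -> Rabs (A * x - INR n / 2) < 1/2 -> Rabs (INR n / (2 * A) - x) < d.
Proof.
  intros Hd HdA Hn.
  assert (HAd : 1 < A * d).
  { apply Rmult_lt_reg_r with (/ d); [apply Rinv_0_lt_compat; lra |].
    rewrite Rmult_assoc, Rinv_r, Rmult_1_r by lra; unfold Rdiv in HdA; lra. }
  assert (HA : 0 < A) by nra.
  replace (INR n / (2 * A) - x) with ((INR n / 2 - A * x) * / A) by (field; lra).
  rewrite Rabs_mult, Rabs_inv, (Rabs_right A), Rabs_minus_sym by lra.
  apply Rmult_lt_reg_r with A; [exact HA |].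
  rewrite Rmult_assoc, Rinv_l, Rmult_1_r by lra; nra.
Qed.

Lemma grid_point_range (A : R) (n : nat) :
  0 < A -> INR n <= 2 * A -> 0 <= INR n / (2 * A) <= 1.
Proof.
  intros HA Hn; split.
  - apply Rmult_le_pos; [apply pos_INR | apply Rlt_le, Rinv_0_lt_compat; lra].
  - apply Rmult_le_reg_r with (2 * A); [lra |].
    unfold Rdiv; rewrite Rmult_assoc, Rinv_l by lra; lra.
Qed.

Lemma net_core_uniform_approx (F : R -> R) (Na : nat) (eta eta' : R) :
  5 <= INR Na -> 0 < eta ->
  (forall n, (n <= 2 * Na)%nat -> 0 <= F (INR n / (2 * INR Na)) <= 1/2) ->
  (forall x n, 0 <= x <= 9/10 -> (n <= 2 * Na)%nat ->
     Rabs (INR Na * x - INR n / 2) < 1/2 -> Rabs (F (INR n / (2 * INR Na)) - F x) < eta') ->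
  exists L p, 0 < L /\ 0 <= p /\
    forall x, 0 <= x <= 9/10 -> Rabs (net_core (INR Na) L p x - F x) < eta + eta'.
Proof.
  intros HA Heta HF Hclose.
  assert (Hidx : forall n, INR n <= 2 * INR Na -> (n <= 2 * Na)%nat)
    by (intros n Hn; apply INR_le; rewrite mult_INR; simpl; lra).
  destruct (exists_common_multiple_gt (2 * Na) (1 / eta)) as (Lz & HLz & HLeta & Hdiv).
  destruct (grid_encoding (fun n => F (INR n / (2 * INR Na))) (2 * Na) Lz HLz Hdiv HF)
    as (pz & Hpz & Henc).
  assert (HL : 0 < IZR Lz) by (apply IZR_lt; lia).
  assert (HinvL : 1 / IZR Lz < eta).
  { assert (H : / IZR Lz < / (1 / eta))
      by (apply Rinv_lt_contravar; [apply Rmult_lt_0_compat; [apply Rdiv_lt_0_compat |] |]; lra).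
    replace (/ (1 / eta)) with eta in H by (field; lra).
    unfold Rdiv; lra. }
  exists (IZR Lz), (IZR pz); split; [exact HL |]; split; [apply IZR_le; exact Hpz |].
  intros x Hx.
  apply (net_core_approx _ _ _ _ _ _ _ (fun n => F (INR n / (2 * INR Na)))); try assumption.
  - apply IZR_le; exact Hpz.
  - intros n Hn; pose proof (Henc n (Hidx n Hn)); pose proof (HF n (Hidx n Hn)); lra.
  - intros n Hn Hnear; exact (Hclose x n Hx (Hidx n Hn) Hnear).
Qed.

Lemma net_approx_from_grid (f : R -> R) (Na : nat) (B e eps : R) :
  5 <= INR Na -> 0 < B -> e < eps ->
  (forall n, (n <= 2 * Na)%nat -> Rabs (f (INR n / (2 * INR Na))) <= B) ->
  (forall x n, 0 <= x <= 9/10 -> (n <= 2 * Na)%nat ->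
     Rabs (INR Na * x - INR n / 2) < 1/2 -> Rabs (f (INR n / (2 * INR Na)) - f x) < e) ->
  exists phi, generated_by_net 36 5 phi /\
    forall x, 0 <= x <= 9/10 -> Rabs (phi x - f x) < eps.
Proof.
  intros HA HB He HfB Hclose.
  set (F x := (f x + B) / (4 * B)).
  assert (Hinv : 0 < / (4 * B)) by (apply Rinv_0_lt_compat; lra).
  destruct (net_core_uniform_approx F Na ((eps - e) / (8 * B)) (e / (4 * B)))
    as (L & p & HL & Hp & Happ).
  - exact HA.
  - apply Rdiv_lt_0_compat; lra.
  - intros n Hn; pose proof (Rabs_le_bounds _ _ (HfB n Hn)).
    assert (2 * B * / (4 * B) = 1/2) by (field; lra).
    unfold F, Rdiv; split; nra.
  - intros x n Hx Hn Hnear; unfold F.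
    replace ((f (INR n / (2 * INR Na)) + B) / (4 * B) - (f x + B) / (4 * B))
      with ((f (INR n / (2 * INR Na)) - f x) * / (4 * B)) by (field; lra).
    rewrite Rabs_mult, (Rabs_right (/ (4 * B))) by lra.
    apply Rmult_lt_compat_r; [exact Hinv | exact (Hclose x n Hx Hn Hnear)].
  - exists (net_eval (net_layers (INR Na) L p) (fun _ => 2 * B) (- B)).
    split; [apply net_layers_generated |]; intros x Hx; rewrite net_eval_net_layers.
    replace (4 * B * net_core (INR Na) L p x - B - f x)
      with (4 * B * (net_core (INR Na) L p x - F x)) by (unfold F; field; lra).
    rewrite Rabs_mult, (Rabs_right (4 * B)) by lra.
    apply Rlt_le_trans with (4 * B * ((eps - e) / (8 * B) + e / (4 * B))).
    + apply Rmult_lt_compat_l; [lra | exact (Happ x Hx)].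
    + replace (4 * B * ((eps - e) / (8 * B) + e / (4 * B))) with ((eps + e) / 2)
        by (field; lra); lra.
Qed.

Theorem theorem15 :
  forall f : R -> R,
    continuous_on_01 f ->
    forall eps, 0 < eps ->
    exists phi : R -> R,
      generated_by_net 36 5 phi /\
      forall x, 0 <= x <= 9/10 -> Rabs (phi x - f x) < eps.
Proof.
  intros f Hf eps Heps.
  destruct (continuous_on_01_uniform f Hf (eps / 2)) as (d & Hd & Hfd); [lra |].
  destruct (INR_unbounded (1 / d + 5)) as [Na HNa].
  assert (Hd' : 0 < 1 / d) by (apply Rdiv_lt_0_compat; lra).
  destruct (finite_bound (fun n => f (INR n / (2 * INR Na))) (2 * Na)) as (B & HB & HfB).
  apply (net_approx_from_grid f Na B (eps / 2)); [lra | exact HB | lra | exact HfB |].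
  intros x n Hx Hn Hnear.
  assert (HnNa : INR n <= 2 * INR Na)
    by (apply le_INR in Hn; rewrite mult_INR in Hn; simpl in Hn; lra).
  apply Hfd; [apply grid_point_range; lra | lra |].
  apply grid_point_close; [exact Hd | lra | exact Hnear].
Qed.
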